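(* Let $\mathcal E$ be a nest on a complex Banach space $X$ and let $\mathcal J$ be a $\mathcal T(\mathcal E)$-bimodule. Then for every $E\in\mathcal E$ the subspace $[\mathcal J E]$ belongs to $\mathcal E$, and the map $\Phi_{\mathcal J}:\mathcal E\to\mathcal E$, $E\mapsto[\mathcal JE]$, is an admissible support function on $\mathcal E$.
   Context: A nest $\mathcal E$ on $X$ is a family of closed linear subspaces of $X$, totally ordered by inclusion, containing $\{0\}$ and $X$, closed under arbitrary meets $\wedge$ (intersections) and joins $\vee$ (norm-closed linear spans of unions). For $E\in\mathcal E$, $E_-=\vee\{F\in\mathcal E: F\subsetneq E\}$. $\mathcal T(\mathcal E)=\{T\in\mathcal B(X): TE\subseteq E\ \forall E\in\mathcal E\}$ is the nest algebra. A $\mathcal T(\mathcal E)$-bimodule is a linear subspace $\mathcal J\subseteq\mathcal B(X)$ with $\mathcal T(\mathcal E)\mathcal J\subseteq\mathcal J$ and $\mathcal J\mathcal T(\mathcal E)\subseteq\mathcal J$. $[\mathcal JE]$ is the norm-closed linear span of $\{Tx: T\in\mathcal J, x\in E\}$. A support function on $\mathcal E$ is an inclusion-preserving map $\Phi:\mathcal E\to\mathcal E$; it is admissible if for every $N\in\mathcal E\setminus\{\{0\}\}$, $\vee_{E\in\mathcal E, E\subsetneq N}\Phi(E)=\Phi(N_-)$. *)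

From mathcomp Require Import all_boot all_algebra.
From mathcomp Require Import all_classical all_reals all_analysis.
From mathcomp Require Export complex.
Import numFieldNormedType.Exports.

Set Implicit Arguments.
Unset Strict Implicit.
Unset Printing Implicit Defensive.

Local Open Scope classical_set_scope.
Local Open Scope ring_scope.

Section NestDefs.
Variables (K : numFieldType) (V : normedModType K).

Definition lin_subspace (S : set V) : Prop :=
  S 0 /\ (forall x y, S x -> S y -> S (x + y)) /\
  (forall (a : K) x, S x -> S (a *: x)).

Definition closed_subspace (S : set V) : Prop := lin_subspace S /\ closed S.

Definition clspan (A : set V) : set V :=
  [set x | forall S, closed_subspace S -> A `<=` S -> S x].

Definition smeet (F : set (set V)) : set V := [set x | forall E, F E -> E x].
Definition sjoin (F : set (set V)) : set V := clspan (\bigcup_(E in F) E).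

Definition psub (A B : set V) : Prop := A `<=` B /\ A <> B.

Definition bounded_op (T : V -> V) : Prop :=
  (forall (a : K) x y, T (a *: x + y) = a *: T x + T y) /\
  (exists M : K, forall x, `|T x| <= M * `|x|).

Definition nest (N : set (set V)) : Prop :=
  (forall E, N E -> closed_subspace E) /\
  (forall E F, N E -> N F -> E `<=` F \/ F `<=` E) /\
  N [set 0] /\ N setT /\
  (forall F, F `<=` N -> N (smeet F)) /\
  (forall F, F `<=` N -> N (sjoin F)).

Definition nest_minus (N : set (set V)) (E : set V) : set V :=
  sjoin [set F | N F /\ psub F E].

Definition nest_alg (N : set (set V)) : set (V -> V) :=
  [set T | bounded_op T /\ forall E, N E -> T @` E `<=` E].

Definition bimodule (N : set (set V)) (J : set (V -> V)) : Prop :=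
  (forall T, J T -> bounded_op T) /\
  J (fun _ => 0) /\
  (forall S T, J S -> J T -> J (fun x => S x + T x)) /\
  (forall (a : K) T, J T -> J (fun x => a *: T x)) /\
  (forall A T, nest_alg N A -> J T -> J (A \o T) /\ J (T \o A)).

Definition JE (J : set (V -> V)) (E : set V) : set V :=
  clspan [set y | exists T x, J T /\ E x /\ y = T x].

Definition support_function (N : set (set V)) (Phi : set V -> set V) : Prop :=
  (forall E, N E -> N (Phi E)) /\
  (forall E F, N E -> N F -> E `<=` F -> Phi E `<=` Phi F).

Definition admissible (N : set (set V)) (Phi : set V -> set V) : Prop :=
  support_function N Phi /\
  forall M, N M -> M <> [set 0] ->
    sjoin [set Phi E | E in [set E | N E /\ psub E M]] = Phi (nest_minus N M).

End NestDefs.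

From mathcomp Require Import all_boot all_algebra.
From mathcomp Require Import all_classical all_reals all_analysis.
From mathcomp Require Import complex.
From mathcomp Require Import ring lra.
Import numFieldNormedType.Exports.
Import order.Order.TTheory GRing.Theory Num.Theory.

Set Implicit Arguments.
Unset Strict Implicit.
Unset Printing Implicit Defensive.

Local Open Scope classical_set_scope.
Local Open Scope ring_scope.
Local Open Scope complex_scope.

(* Since J is a left T(E)-module, [J E] is a closed subspace invariant under
   the nest algebra.  The heart of the proof is that every such subspace
   belongs to the nest (invariant_in_nest): it is squeezed between the join of
   the successors G_+ of the members G not containing it and the meet of the
   members containing it, and the first inclusion is obtained with rank-one
   operators z |-> f z x of T(E).  Building these needs bounded functionals
   separating a closed subspace from a point, i.e. the Hahn-Banach theorem,
   which is proved here: the real dominated extension theorem via graphs of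
   dominated functionals and Zorn's lemma, then the complex separation theorem
   by complexification.  Admissibility follows because E |-> [J E] is monotone
   and commutes with closed joins, the elements of J being continuous. *)

Section RealNorm.
Variables (R : realType) (X : normedModType R[i]).

(* The norm of a complex normed space takes nonnegative real values; [rnorm x]
   is that real number, so that arguments about real inequalities apply. *)
Definition rnorm (x : X) : R := complex.Re `|x|.

Lemma normE (x : X) : `|x| = (rnorm x)%:C.
Proof. by rewrite /rnorm RRe_real // ger0_real. Qed.

Lemma rnorm_ge0 (x : X) : 0 <= rnorm x.
Proof. by rewrite -ler0c -normE. Qed.

Lemma rnormD (x y : X) : rnorm (x + y) <= rnorm x + rnorm y.
Proof. by rewrite -lecR rmorphD /= -!normE ler_normD. Qed.

Lemma rnormZ (a : R[i]) (x : X) : rnorm (a *: x) = complex.Re `|a| * rnorm x.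
Proof. by rewrite {1}/rnorm normrZ normE; case: `|a| => u v; simpc; rewrite mulrC. Qed.

End RealNorm.

Lemma Re_norm_real (R : realType) (t : R) : complex.Re `|t%:C| = `|t|.
Proof. by rewrite normc_def /= expr0n /= addr0 sqrtr_sqr. Qed.

Lemma Re_le_norm (R : realType) (a : R[i]) : complex.Re a <= complex.Re `|a|.
Proof.
have := normc_ge_Re a; rewrite [`|a|]normc_def lecR /=.
exact/le_trans/ler_norm.
Qed.

Lemma scale_realK (R : realType) (X : lmodType R[i]) (t : R) (d : X) :
  t != 0 -> t%:C *: ((t^-1)%:C *: d) = d.
Proof. by move=> t0; rewrite scalerA -rmorphM /= mulfV // scale1r. Qed.

Section DominatedExtension.
Variables (R : realType) (X : lmodType R[i]) (p : X -> R).
Hypothesis pD : forall x y, p (x + y) <= p x + p y.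
Hypothesis pZ : forall (t : R) x, 0 <= t -> p (t%:C *: x) = t * p x.

(* [dominated_graph A]: A is the graph of a real-linear functional, defined on
   a real subspace of X, bounded above by the sublinear functional p.  These
   graphs are the objects of the (real) Hahn-Banach extension argument. *)
Definition dominated_graph (A : set (X * R)) : Prop :=
  [/\ (forall a b, A a -> A b -> A (a.1 + b.1, a.2 + b.2)),
      (forall (t : R) a, A a -> A (t%:C *: a.1, t * a.2)),
      (forall x r s, A (x, r) -> A (x, s) -> r = s) &
      (forall a, A a -> a.2 <= p a.1)].

Definition adjoin (A : set (X * R)) (x0 : X) (c : R) : set (X * R) :=
  [set a | exists d r (t : R), A (d, r) /\ a = (d + t%:C *: x0, r + t * c)].

Variables (A : set (X * R)) (x0 : X).
Hypotheses (Adom : dominated_graph A) (A0 : A (0, 0)).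
Hypothesis x0_notin : ~ (exists r, A (x0, r)).

(* The value c at x0 must lie between the two bounds forced by domination;
   sublinearity of p makes the lower bounds smaller than the upper ones, so
   the supremum of the lower bounds is an admissible choice. *)
Lemma extension_constant : exists c : R,
  (forall d r, A (d, r) -> r - p (d - x0) <= c) /\
  (forall d r, A (d, r) -> c <= p (d + x0) - r).
Proof.
have [Aadd _ _ Ab] := Adom.
have lower_le_upper d r e q : A (d, r) -> A (e, q) -> q - p (e - x0) <= p (d + x0) - r.
  move=> Adr Aeq; have := Ab _ (Aadd _ _ Aeq Adr); rewrite /= => Hp.
  have := pD (e - x0) (d + x0); rewrite addrCA subrK addrC; lra.
pose L := [set z | exists d r, A (d, r) /\ z = r - p (d - x0)].
have L0 : L !=set0 by exists (0 - p (0 - x0)), 0, 0.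
have Lub : has_ubound L.
  by exists (p (0 + x0) - 0) => _ [d [r [Adr ->]]]; exact: lower_le_upper A0 Adr.
exists (sup L); split => [d r Adr|d r Adr].
- by apply: (ub_le_sup Lub); exists d, r.
- by apply: ge_sup => // _ [e [q [Aeq ->]]]; exact: lower_le_upper Adr Aeq.
Qed.

Lemma adjoin_linear (c : R) :
  (forall a b, adjoin A x0 c a -> adjoin A x0 c b -> adjoin A x0 c (a.1 + b.1, a.2 + b.2)) /\
  (forall (t : R) a, adjoin A x0 c a -> adjoin A x0 c (t%:C *: a.1, t * a.2)).
Proof.
have [Aadd Asc _ _] := Adom; split.
- move=> _ _ [d1 [r1 [t1 [A1 ->]]]] [d2 [r2 [t2 [A2 ->]]]] /=.
  exists (d1 + d2), (r1 + r2), (t1 + t2); split; first exact: Aadd A1 A2.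
  by congr pair; rewrite ?rmorphD /= ?scalerDl ?mulrDl addrACA.
- move=> s _ [d [r [t [Adr ->]]]] /=.
  exists (s%:C *: d), (s * r), (s * t); split; first exact: Asc _ _ Adr.
  by congr pair; rewrite ?scalerDr ?scalerA -?rmorphM ?mulrDr ?mulrA.
Qed.

(* Since x0 is outside the domain of A, each vector of the span has a unique
   decomposition, so the adjoined relation is still a function. *)
Lemma adjoin_functional (c : R) x r s :
  adjoin A x0 c (x, r) -> adjoin A x0 c (x, s) -> r = s.
Proof.
have [Aadd Asc Afun _] := Adom.
move=> [d1 [r1 [t1 [A1 [-> ->]]]]] [d2 [r2 [t2 [A2 []]]]].
have [<- /addIr d12|t12] := eqVneq t1 t2.
  by move=> ->; subst d2; rewrite (Afun _ _ _ A1 A2).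
move=> Ed _; exfalso; apply: x0_notin.
have Adiff := Asc (-1) _ A1; rewrite /= rmorphN1 scaleN1r in Adiff.
have := Asc ((t1 - t2)^-1) _ (Aadd _ _ A2 Adiff); rewrite /=.
have -> : d2 - d1 = (t1 - t2)%:C *: x0.
  have -> : d1 = d2 + t2%:C *: x0 - t1%:C *: x0 by rewrite -Ed addrK.
  by rewrite rmorphB /= scalerBl opprB addrCA opprD addNKr.
by rewrite scalerA -rmorphM /= mulVf ?subr_eq0 // scale1r => Ax0; eexists; exact: Ax0.
Qed.

(* With c between the bounds of extension_constant the adjoined functional
   stays dominated: by positive homogeneity of p, the case of a vector
   d + t x0 reduces to the bounds at t^-1 d (t > 0) or (-t)^-1 d (t < 0). *)
Lemma adjoin_dominated (c : R) :
  (forall d r, A (d, r) -> r - p (d - x0) <= c) ->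
  (forall d r, A (d, r) -> c <= p (d + x0) - r) ->
  forall a, adjoin A x0 c a -> a.2 <= p a.1.
Proof.
have [_ Asc _ Ab] := Adom.
move=> c_ge c_le _ [d [r [t [Adr ->]]]] /=.
have [t_lt0|t_gt0|->] := ltgtP t 0; last first.
- by rewrite scale0r mul0r !addr0; exact: Ab _ Adr.
- have tn0 : t != 0 by rewrite gt_eqF.
  have := c_le _ _ (Asc t^-1 _ Adr); rewrite /=.
  rewrite -(ler_pM2l t_gt0) mulrBr -(pZ _ (ltW t_gt0)) scalerDr scale_realK //.
  by rewrite mulrA mulfV // mul1r; lra.
- pose s := - t; have s_gt0 : 0 < s by rewrite oppr_gt0.
  have sn0 : s != 0 by rewrite gt_eqF.
  have := c_ge _ _ (Asc s^-1 _ Adr); rewrite /=.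
  rewrite -(ler_pM2l s_gt0) mulrBr -(pZ _ (ltW s_gt0)) scalerBr scale_realK //.
  rewrite mulrA mulfV // mul1r.
  have -> : d - s%:C *: x0 = d + t%:C *: x0 by rewrite /s rmorphN scaleNr opprK.
  rewrite /s; lra.
Qed.

Lemma dominated_graph_extend :
  exists B, dominated_graph B /\ A `<=` B /\ ~ (B `<=` A).
Proof.
have [c [c_ge c_le]] := extension_constant.
have [Badd Bsc] := adjoin_linear c.
exists (adjoin A x0 c); split; last split.
- split => //; [exact: adjoin_functional | exact: adjoin_dominated].
- by move=> [d r] Adr; exists d, r, 0; rewrite scale0r mul0r !addr0.
- move=> /(_ (x0, c)) BA; apply: x0_notin; exists c; apply: BA.
  by exists 0, 0, 1; rewrite rmorph1 scale1r mul1r !add0r.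
Qed.

End DominatedExtension.

Section HahnBanach.
Variables (R : realType) (X : lmodType R[i]) (p : X -> R).
Hypothesis pD : forall x y, p (x + y) <= p x + p y.
Hypothesis pZ : forall (t : R) x, 0 <= t -> p (t%:C *: x) = t * p x.

(* The defining conditions of a dominated graph involve at most two points, so
   a relation in which any two points lie in a common dominated subgraph is
   itself a dominated graph. *)
Lemma dominated_graph_local (U : set (X * R)) :
  (forall a b, U a -> U b -> exists W, [/\ dominated_graph p W, W `<=` U, W a & W b]) ->
  dominated_graph p U.
Proof.
move=> two; split.
- by move=> a b Ua Ub; have [W [[Wadd _ _ _] WU Wa Wb]] := two _ _ Ua Ub; exact/WU/Wadd.
- by move=> t a Ua; have [W [[_ Wsc _ _] WU Wa _]] := two _ _ Ua Ua; exact/WU/Wsc.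
- by move=> x r s Ur Us; have [W [[_ _ Wf _] _ Wa Wb]] := two _ _ Ur Us; exact: Wf Wa Wb.
- by move=> a Ua; have [W [[_ _ _ Wb] _ Wa _]] := two _ _ Ua Ua; exact: Wb.
Qed.

Lemma dominated_graph_chain (G0 : set (X * R)) (F : set (set (X * R))) :
  dominated_graph p G0 -> (forall Y, F Y -> dominated_graph p (Y `|` G0)) ->
  total_on F subset -> dominated_graph p (\bigcup_(Y in F) Y `|` G0).
Proof.
move=> G0dom Fdom Ftot; apply: dominated_graph_local.
have sub Y : F Y -> Y `|` G0 `<=` \bigcup_(Y in F) Y `|` G0.
  by move=> FY z [Yz|Gz]; [left; exists Y | right].
move=> a b [[Y FY Ya]|Ga] [[Z FZ Zb]|Gb].
- have [YZ|ZY] := Ftot _ _ FY FZ.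
    by exists (Z `|` G0); split; [exact: Fdom | exact: sub | left; exact: YZ | left].
  by exists (Y `|` G0); split; [exact: Fdom | exact: sub | left | left; exact: ZY].
- by exists (Y `|` G0); split; [exact: Fdom | exact: sub | left | right].
- by exists (Z `|` G0); split; [exact: Fdom | exact: sub | right | left].
- by exists G0; split => // z Gz; right.
Qed.

(* A maximal extension, provided
   by Zorn's lemma, is total since it could otherwise be extended further. *)
Lemma dominated_graph_total (G0 : set (X * R)) :
  dominated_graph p G0 -> G0 (0, 0) ->
  exists A, [/\ dominated_graph p A, G0 `<=` A & forall x, exists r, A (x, r)].
Proof.
move=> G0dom G00.
pose P A := dominated_graph p (A `|` G0).
have [A [PA Amax]] : exists A, P A /\ forall B, A `<` B -> ~ P B.
  by apply: Zorn_bigcup => F FP Ftot; exact: dominated_graph_chain.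
exists (A `|` G0); split; [exact: PA | by move=> z Gz; right | ].
move=> x0; apply: contrapT => x0_notin.
have [B [Bdom [AB BnA]]] := dominated_graph_extend pD pZ PA (or_intror G00) x0_notin.
apply: (Amax B).
  split; first by move=> z Az; apply: AB; left.
  by move=> BA; apply: BnA => z Bz; left; exact: BA.
by rewrite /P setUidl // => z Gz; apply: AB; right.
Qed.

End HahnBanach.

Section Separation.
Variables (R : realType) (X : normedModType R[i]).

Lemma closed_dist_pos (G : set X) (y : X) :
  closed G -> ~ G y -> exists d : R, 0 < d /\ forall g, G g -> d <= rnorm (y - g).
Proof.
move=> cG Gy.
have /nbhs_ballP [e e0 ball_notG] : nbhs y (~` G).
  by apply: open_nbhs_nbhs; split => //; exact: closed_openC.
have eE : e = (complex.Re e)%:C by rewrite RRe_real // gtr0_real.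
exists (complex.Re e); split; first by rewrite -ltcR -eE.
move=> g Gg; rewrite leNgt; apply/negP => lt_dist; apply: (ball_notG g) => //.
by rewrite -ball_normE /ball_ /= normE eE ltcR.
Qed.

Lemma subspace_opp (G : set X) x : lin_subspace G -> G x -> G (- x).
Proof. by move=> [_ [_ GZ]] /(GZ (-1)); rewrite scaleN1r. Qed.

Definition line_graph (G : set X) (y : X) : set (X * R) :=
  [set a | exists g (l : R[i]), G g /\ a = (g + l *: y, complex.Re l)].

Lemma line_graph_dominated (G : set X) (y : X) (d : R) :
  lin_subspace G -> ~ G y -> 0 < d -> (forall g, G g -> d <= rnorm (y - g)) ->
  dominated_graph (fun z => d^-1 * rnorm z) (line_graph G y).
Proof.
move=> LG Gy d_gt0 dist_ge; have [_ [GD GZ]] := LG; split.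
- move=> _ _ [g1 [l1 [G1 ->]]] [g2 [l2 [G2 ->]]] /=.
  exists (g1 + g2), (l1 + l2); split; first exact: GD.
  by rewrite scalerDl addrACA; case: l1 l2 => [? ?] [? ?].
- move=> t _ [g [l [Gg ->]]] /=.
  exists (t%:C *: g), (t%:C * l); split; first exact: GZ.
  by rewrite scalerDr scalerA; case: l => ? ?; simpc.
- move=> x r s [g1 [l1 [G1 [-> ->]]]] [g2 [l2 [G2 [Eg ->]]]].
  have [-> //|l12] := eqVneq l1 l2; exfalso; apply: Gy.
  have l12' : l1 - l2 != 0 by rewrite subr_eq0.
  have -> : y = (l1 - l2)^-1 *: (g2 - g1).
    apply: (scalerI l12'); rewrite scalerA mulfV // scale1r scalerBl.
    have -> : g1 = g2 + l2 *: y - l1 *: y by rewrite -Eg addrK.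
    by rewrite opprB addrCA opprD addNKr.
  by apply: GZ; apply: GD => //; exact: subspace_opp.
- move=> _ [g [l [Gg ->]]] /=.
  have [->|l0] := eqVneq l 0.
    by rewrite scale0r addr0 mulr_ge0 ?rnorm_ge0 // invr_ge0 ltW.
  have -> : g + l *: y = l *: (y - (- l^-1 *: g)).
    by rewrite scalerBr scalerA mulrN mulfV // scaleN1r opprK addrC.
  have dist := dist_ge _ (GZ (- l^-1) _ Gg); have ReL := Re_le_norm l.
  have L0 : 0 <= complex.Re `|l| by rewrite -ler0c RRe_real ?ger0_real.
  rewrite rnormZ; move: (complex.Re `|l|) (rnorm _) L0 ReL dist => L M L0 ReL dist.
  rewrite ler_pdivlMl //; nra.
Qed.


Lemma real_separating_functional (G : set X) (y : X) :
  closed_subspace G -> ~ G y -> exists (v : X -> R) (C : R),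
  [/\ forall x z, v (x + z) = v x + v z,
      forall (t : R) x, v (t%:C *: x) = t * v x,
      0 <= C /\ forall x, v x <= C * rnorm x &
      forall g l, G g -> v (g + l *: y) = complex.Re l].
Proof.
move=> [LG cG] Gy; have [d [d_gt0 dist_ge]] := closed_dist_pos cG Gy.
pose p := fun z : X => d^-1 * rnorm z.
have pD x z : p (x + z) <= p x + p z by rewrite /p -mulrDr ler_pM2l ?invr_gt0 // rnormD.
have pZ (t : R) x : 0 <= t -> p (t%:C *: x) = t * p x.
  by move=> t0; rewrite /p rnormZ Re_norm_real ger0_norm // mulrCA.
have L00 : line_graph G y (0, 0).
  by exists 0, 0; split; [case: LG | rewrite scale0r addr0].
have [A [[Aadd Asc Afun Ab] LA Atot]] :=
  dominated_graph_total pD pZ (line_graph_dominated LG Gy d_gt0 dist_ge) L00.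
pose v x := projT1 (cid (Atot x)).
have vA x : A (x, v x) := projT2 (cid (Atot x)).
exists v, d^-1; split.
- by move=> x z; apply: Afun (vA _) (Aadd _ _ (vA x) (vA z)).
- by move=> t x; apply: Afun (vA _) (Asc _ _ (vA x)).
- by split=> [|x]; [rewrite invr_ge0 ltW | exact: Ab _ (vA x)].
- by move=> g l Gg; apply: Afun (vA _) (LA _ _); exists g, l.
Qed.

Section Complexification.
Variables (v : X -> R) (C : R).
Hypotheses (vD : forall x z, v (x + z) = v x + v z)
  (vZ : forall (t : R) x, v (t%:C *: x) = t * v x)
  (C_ge0 : 0 <= C) (v_le : forall x, v x <= C * rnorm x).

(* The complex-linear functional whose real part is the real-linear v. *)
Definition complexify (x : X) : R[i] := (v x)%:C - 'i * (v ('i *: x))%:C.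

Let ii : 'i * 'i = -1 :> R[i].
Proof. by rewrite -expr2 sqr_i. Qed.

Lemma complexifyD x z : complexify (x + z) = complexify x + complexify z.
Proof. by rewrite /complexify scalerDr !vD !rmorphD /=; ring. Qed.

Lemma complexify_real (t : R) x : complexify (t%:C *: x) = t%:C * complexify x.
Proof.
rewrite /complexify.
have -> : 'i *: (t%:C *: x) = t%:C *: ('i *: x) by rewrite !scalerA mulrC.
by rewrite !vZ !rmorphM /=; ring.
Qed.

Lemma complexify_i x : complexify ('i *: x) = 'i * complexify x.
Proof.
rewrite /complexify scalerA ii -(rmorphN1 (real_complex R)) vZ mulN1r.
by rewrite mulrBr mulrA ii rmorphN /=; ring.
Qed.

(* Complex homogeneity follows from real homogeneity and homogeneity for 'i,
   writing a = Re a + 'i Im a. *)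
Lemma complexifyZ (a : R[i]) x : complexify (a *: x) = a * complexify x.
Proof.
rewrite {1}[a]complexE scalerDl [('i * _)]mulrC -scalerA complexifyD.
by rewrite !complexify_real complexify_i {3}[a]complexE ?complexiE; ring.
Qed.

Lemma complexify_linear (a : R[i]) x z :
  complexify (a *: x + z) = a * complexify x + complexify z.
Proof. by rewrite complexifyD complexifyZ. Qed.

Lemma Re_complexify x : complex.Re (complexify x) = v x.
Proof. by rewrite /complexify; simpc. Qed.

(* Rotating z so that complexify z becomes real and nonnegative turns the real
   bound for v into the bound for the modulus of complexify. *)
Lemma complexify_bound z : `|complexify z| <= C%:C * `|z|.
Proof.
have [->|fz0] := eqVneq (complexify z) 0.
  by rewrite normr0 mulr_ge0 // ler0c.
pose w := `|complexify z| / complexify z.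
have fw : complexify (w *: z) = `|complexify z|.
  by rewrite complexifyZ /w mulfVK.
have nw : complex.Re `|w| = 1 by rewrite /w normrM normfV normr_id mulfV ?normr_eq0.
have := v_le (w *: z); rewrite rnormZ nw mul1r -Re_complexify fw.
have -> : `|complexify z| = (complex.Re `|complexify z|)%:C by rewrite RRe_real ?ger0_real.
by rewrite normE -rmorphM lecR.
Qed.

End Complexification.

Lemma separating_functional (G : set X) (y : X) :
  closed_subspace G -> ~ G y ->
  exists f : X -> R[i],
    (forall (a : R[i]) x z, f (a *: x + z) = a * f x + f z) /\
    (exists C : R, 0 <= C /\ forall z, `|f z| <= C%:C * `|z|) /\
    (forall g, G g -> f g = 0) /\ f y = 1.
Proof.
move=> cG Gy; have [[G0 [_ GZ]] _] := cG.
have [v [C [vD vZ [C_ge0 v_le] v_line]]] := real_separating_functional cG Gy.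
have vG g : G g -> v g = 0 by move=> Gg; rewrite -[g]addr0 -(scale0r y) v_line.
exists (complexify v); split; last split; last split.
- exact: complexify_linear.
- by exists C; split => //; exact: complexify_bound.
- by move=> g Gg; rewrite /complexify !vG ?mulr0 ?subrr //; exact: GZ.
- have vy : v y = 1 by rewrite -[y]add0r -[y in 0 + y]scale1r v_line.
  have viy : v ('i *: y) = 0 by rewrite -[_ *: y]add0r v_line.
  by rewrite /complexify vy viy mulr0 subr0.
Qed.

End Separation.

Section Operators.
Variables (R : realType) (X : normedModType R[i]).

Lemma bounded_op_linear (T : X -> X) : bounded_op T ->
  [/\ T 0 = 0, forall x y, T (x + y) = T x + T y & forall (a : R[i]) x, T (a *: x) = a *: T x].
Proof.
move=> [TL _].
have T0 : T 0 = 0 by have := TL (-1) 0 0; rewrite scaler0 addr0 scaleN1r addNr.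
split => // [x y|a x]; first by have := TL 1 x y; rewrite !scale1r.
by have := TL a x 0; rewrite !addr0 T0 addr0.
Qed.

Lemma bounded_op_pos_bound (T : X -> X) :
  bounded_op T -> exists M : R[i], 0 < M /\ forall x, `|T x| <= M * `|x|.
Proof.
move=> [_ [M TM]]; exists (`|M| + 1); split; first exact: ltr_wpDl.
move=> x; have MTx := TM x; have Mx_ge0 : 0 <= M * `|x| by exact: le_trans MTx.
apply: le_trans MTx _; rewrite -(ger0_norm Mx_ge0) normrM normr_id.
by apply: ler_wpM2r => //; rewrite lerDl.
Qed.

Lemma bounded_op_continuous (T : X -> X) : bounded_op T -> continuous T.
Proof.
move=> bT; have [_ TD TZ] := bounded_op_linear bT.
have [M [M_gt0 TM]] := bounded_op_pos_bound bT.
move=> x; apply/cvgrPdist_lt => e e_gt0; apply/nbhs_ballP.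
exists (e / M); first exact: divr_gt0.
move=> z; rewrite -ball_normE /ball_ /= => xz_lt.
have TN : T (- z) = - T z by rewrite -scaleN1r TZ scaleN1r.
have -> : T x - T z = T (x - z) by rewrite TD TN.
by apply: le_lt_trans (TM _) _; rewrite mulrC -ltr_pdivlMr.
Qed.

Lemma preimage_closed_subspace (T : X -> X) (S : set X) :
  bounded_op T -> closed_subspace S -> closed_subspace (T @^-1` S).
Proof.
move=> bT [[S0 [SD SZ]] cS]; have [T0 TD TZ] := bounded_op_linear bT.
split; first split; [|split|].
- by rewrite /preimage /= T0.
- by move=> x y; rewrite /preimage /= TD; exact: SD.
- by move=> a x; rewrite /preimage /= TZ; exact: SZ.
- by apply: preimage_closed => // x _; exact: bounded_op_continuous.
Qed.

End Operators.

Section ClosedSpan.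
Variables (R : realType) (X : normedModType R[i]).
Implicit Types (A B S : set X).

Lemma clspan_min A S : closed_subspace S -> A `<=` S -> clspan A `<=` S.
Proof. by move=> cS AS x; apply. Qed.

Lemma clspan_sup A : A `<=` clspan A.
Proof. by move=> x Ax S _; apply. Qed.

Lemma clspan_closed_subspace A : closed_subspace (clspan A).
Proof.
split; first split; [|split|].
- by move=> S [[S0 _] _].
- move=> x y Ax Ay S cS AS; have [[_ [SD _]] _] := cS.
  by apply: SD; [exact: Ax | exact: Ay].
- by move=> a x Ax S cS AS; have [[_ [_ SZ]] _] := cS; apply: SZ; exact: Ax.
- have -> : clspan A = \bigcap_(S in [set S | closed_subspace S /\ A `<=` S]) S.
    by apply/seteqP; split => x Ax S; [case; exact: Ax | move=> cS AS; exact: Ax].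
  by apply: closed_bigI => S [[_ cS] _].
Qed.

Lemma clspan_mono A B : A `<=` B -> clspan A `<=` clspan B.
Proof.
move=> AB; apply: clspan_min; first exact: clspan_closed_subspace.
by move=> x /AB; exact: clspan_sup.
Qed.

Lemma clspan_image (T : X -> X) A S :
  bounded_op T -> closed_subspace S -> (forall x, A x -> S (T x)) ->
  forall x, clspan A x -> S (T x).
Proof.
move=> bT cS AS x Ax; apply: (Ax (T @^-1` S)) => //.
exact: preimage_closed_subspace.
Qed.

End ClosedSpan.

Section InvariantSubspaces.
Variables (R : realType) (X : normedModType R[i]) (N : set (set X)).
Hypothesis nN : nest N.

Definition nest_plus (G : set X) : set X := smeet [set K | N K /\ psub G K].

Lemma rank_one_nest_alg (G : set X) (x : X) (f : X -> R[i]) :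
  N G -> nest_plus G x ->
  (forall (a : R[i]) u w, f (a *: u + w) = a * f u + f w) ->
  (exists C : R, 0 <= C /\ forall z, `|f z| <= C%:C * `|z|) ->
  (forall g, G g -> f g = 0) ->
  nest_alg N (fun z => f z *: x).
Proof.
have [Ncs [Ntot _]] := nN.
move=> NG Gx fL [C [C_ge0 fC]] fG; split.
  split; first by move=> a u w; rewrite fL scalerDl scalerA.
  by exists (C%:C * `|x|) => z; rewrite normrZ mulrAC ler_wpM2r.
move=> K NK _ [z Kz <-]; have [[K0 [_ KZ]] _] := Ncs K NK.
have [KG|KnG] := pselect (K `<=` G); first by rewrite fG ?scale0r //; exact: KG.
have GK : G `<=` K by case: (Ntot _ _ NG NK).
apply: KZ; apply: Gx; split => //; split => // GeqK.
by apply: KnG; rewrite GeqK.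
Qed.

(* If L is not
   contained in the member G of the nest then G_+ is contained in L: for
   y in L \ G and x in G_+, a separating functional for G and y gives a
   rank-one operator of the nest algebra mapping y to x. *)
Lemma invariant_nest_plus (L G : set X) :
  (forall A, nest_alg N A -> forall y, L y -> L (A y)) ->
  N G -> ~ (L `<=` G) -> nest_plus G `<=` L.
Proof.
move=> Linv NG LnG x Gx; have [Ncs _] := nN.
have [y [Ly Gny]] := nonsubset LnG.
have [f [fL [fC [fG fy]]]] := separating_functional (Ncs G NG) Gny.
have := Linv _ (rank_one_nest_alg NG Gx fL fC fG) y Ly.
by rewrite fy scale1r.
Qed.

(* L is squeezed between the join H of the G_+ over the members G of the nest
   not containing L (H is inside L) and the meet F of the members containing
   L (F is inside H). *)
Lemma invariant_in_nest (L : set X) :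
  closed_subspace L -> (forall A, nest_alg N A -> forall y, L y -> L (A y)) -> N L.
Proof.
move=> cL Linv; have [_ [_ [_ [_ [Nmeet Njoin]]]]] := nN.
pose S := [set G | N G /\ ~ (L `<=` G)].
pose H := sjoin [set nest_plus G | G in S].
have HL : H `<=` L.
  by apply: clspan_min => // z [_ [G [NG LnG] <-] Gz]; exact: invariant_nest_plus Gz.
have NH : N H by apply: Njoin => _ [G _ <-]; apply: Nmeet => K [].
have plus_H G : S G -> nest_plus G `<=` H.
  by move=> SG z Gz; apply: clspan_sup; exists (nest_plus G) => //; exists G.
have plus_sup G : G `<=` nest_plus G by move=> z Gz K [_ [GK _]]; exact: GK.
pose F := smeet [set K | N K /\ L `<=` K].
have LF : L `<=` F by move=> z Lz K [_ LK]; exact: LK.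
(* If L is not inside H then H is in S, and every member K of the nest
   properly containing H contains L (otherwise K <= K_+ <= H), so F <= H_+ <= H. *)
have FH : F `<=` H.
  have [LH|LnH] := pselect (L `<=` H); first by move=> z; apply.
  apply: subset_trans (plus_H _ (conj NH LnH)) => z Fz K [NK [HK HneK]]; apply: Fz.
  split => //; apply: contrapT => LnK.
  have KH := subset_trans (plus_sup K) (plus_H K (conj NK LnK)).
  by apply: HneK; apply/seteqP.
have -> : L = F by apply/seteqP; split => // z /FH /HL.
by apply: Nmeet => K [].
Qed.

End InvariantSubspaces.

Section BimoduleRange.
Variables (R : realType) (X : normedModType R[i]) (J : set (X -> X)).

Lemma JE_closed_subspace (E : set X) : closed_subspace (JE J E).
Proof. exact: clspan_closed_subspace. Qed.

Lemma JE_mono (E F : set X) : E `<=` F -> JE J E `<=` JE J F.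
Proof.
move=> EF; apply: clspan_mono => _ [T [x [JT [Ex ->]]]].
by exists T, x; split => //; split => //; exact: EF.
Qed.

Lemma JE_gen (E : set X) T x : J T -> E x -> JE J E (T x).
Proof. by move=> JT Ex; apply: clspan_sup; exists T, x. Qed.

Lemma JE_invariant (E : set X) (A : X -> X) :
  bounded_op A -> (forall T, J T -> J (A \o T)) ->
  forall y, JE J E y -> JE J E (A y).
Proof.
move=> bA AJ; apply: clspan_image bA (JE_closed_subspace E) _.
by move=> _ [T [x [JT [Ex ->]]]]; exact: JE_gen (AJ _ JT) Ex.
Qed.

Lemma JE_sjoin (F : set (set X)) : (forall T, J T -> bounded_op T) ->
  sjoin [set JE J E | E in F] = JE J (sjoin F).
Proof.
move=> Jb; apply/seteqP; split.
- apply: clspan_min; first exact: JE_closed_subspace.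
  move=> z [_ [E FE <-] Ez]; apply: JE_mono Ez => w Ew.
  by apply: clspan_sup; exists E.
- apply: clspan_min; first exact: clspan_closed_subspace.
  move=> _ [T [x [JT [Fx ->]]]].
  apply: clspan_image (Jb T JT) (clspan_closed_subspace _) _ _ Fx => w [E FE Ew].
  by apply: clspan_sup; exists (JE J E); [exists E | exact: JE_gen].
Qed.

End BimoduleRange.

Theorem mainTheorem3 (R : realType) (X : completeNormedModType R[i])
    (N : set (set X)) (J : set (X -> X)) :
  nest N -> bimodule N J ->
  (forall E, N E -> N (JE J E)) /\ admissible N (JE J).
Proof.
move=> nN [Jb [_ [_ [_ Jmul]]]].
have JE_nest E : N (JE J E).
  apply: (invariant_in_nest nN (JE_closed_subspace J E)) => A nA.
  by apply: JE_invariant nA.1 _ => T JT; exact: (Jmul A T nA JT).1.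
split => [E _|]; first exact: JE_nest.
split; first by split => [E _|E F _ _]; [exact: JE_nest | exact: JE_mono].
by move=> M _ _; exact: JE_sjoin.
Qed.
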